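(* Let $M$ be a manifold with local coordinates $x^1,\dots,x^N$, and let $X_1,\dots,X_r,Y_1,\dots,Y_r$ be smooth vector fields on $M$ (we write $\sum X\otimes Y$ for $\sum_{s=1}^r X_s\otimes Y_s$ and suppress the index $s$). Put $\omega^{ij}=\sum (X^iY^j-X^jY^i)$ and assume the matrix $(\omega^{ij})$ is invertible at every point, with inverse $(\omega_{ij})$, i.e. $\omega^{kj}\omega_{js}=\delta^k_s$. Define $$\Gamma^i_{jp}=-\sum \omega_{js}\,\big(X^s\,Y^i_{\ ,p}-Y^s\,X^i_{\ ,p}\big)$$ and let $\nabla$ be the connection on $1$-forms given by $\nabla_{\partial_j}(\xi_i\,{\rm d}x^i)=\xi_{i,j}\,{\rm d}x^i-\Gamma^i_{jp}\,\xi_i\,{\rm d}x^p$. For $a\in C^\infty(M)$ let $\hat a$ be the vector field with components $\hat a^j=\omega^{kj}a_{,k}$, i.e. $\hat a=\sum\big(X(a)\,Y-Y(a)\,X\big)$. Then for all $a\in C^\infty(M)$ and all $1$-forms $\xi$, $$\nabla_{\hat a}\xi=\sum\Big( X(a)\,\big({\rm d}\langle Y,\xi\rangle+\varpi_Y{\rm d}\xi\big)-Y(a)\,\big({\rm d}\langle X,\xi\rangle+\varpi_X{\rm d}\xi\big)\Big),$$ where $\varpi_Z$ denotes interior product with the vector field $Z$ and $\langle Z,\xi\rangle$ the pairing of a vector field with a $1$-form.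
   Context: Subscripts after a comma denote partial derivatives, e.g. $a_{,k}=\partial a/\partial x^k$, $Y^i_{\ ,p}=\partial Y^i/\partial x^p$; repeated indices are summed. This connection arises as follows: with $F^{-1}=1\otimes 1+\hbar\sum X\otimes Y+O(\hbar^2)$ acting by Lie derivatives and the deformed products $a\bullet\xi=(F^{-(1)}\triangleright a)(F^{-(2)}\triangleright \xi)$, one has $a\bullet\xi-\xi\bullet a=\hbar\nabla_{\hat a}\xi+O(\hbar^2)$. *)

(* local coordinates x^1..x^N on an open chart U of R^N *)
From HB Require Import structures.
From mathcomp Require Import all_boot all_order all_algebra.
From mathcomp Require Import all_classical all_reals all_analysis.
Set Implicit Arguments. Unset Strict Implicit. Unset Printing Implicit Defensive.
Import Order.TTheory GRing.Theory Num.Theory.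
Import numFieldNormedType.Exports.
Local Open Scope classical_set_scope.
Local Open Scope ring_scope.

Section Coords.
Variables (R : realType) (N r : nat).
Notation pt := 'rV[R]_N.

Definition pd (k : 'I_N) (f : pt -> R) : pt -> R :=
  fun x => 'D_(delta_mx 0 k) f x.

Fixpoint iter_pd (l : seq 'I_N) (f : pt -> R) : pt -> R :=
  match l with [::] => f | k :: l' => pd k (iter_pd l' f) end.

Definition smooth_on (U : set pt) (f : pt -> R) : Prop :=
  forall (l : seq 'I_N) (x : pt), U x -> differentiable (iter_pd l f) x.

Definition vfield := 'I_N -> pt -> R.
Definition oneform := 'I_N -> pt -> R.
Definition twoform := 'I_N -> 'I_N -> pt -> R.

Definition vf_apply (Z : vfield) (a : pt -> R) : pt -> R :=
  fun x => \sum_(k < N) Z k x * pd k a x.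

Definition pairing (Z : vfield) (xi : oneform) : pt -> R :=
  fun x => \sum_(i < N) Z i x * xi i x.

Definition dfun (f : pt -> R) : oneform := fun p => pd p f.

Definition dform (xi : oneform) : twoform :=
  fun k p x => pd k (xi p) x - pd p (xi k) x.

Definition iprod (Z : vfield) (w : twoform) : oneform :=
  fun p x => \sum_(k < N) Z k x * w k p x.

Variables (X Y : 'I_r -> vfield).

Definition omega (x : pt) : 'M[R]_N :=
  \matrix_(i, j) \sum_(s < r) (X s i x * Y s j x - X s j x * Y s i x).

Definition omega_inv (x : pt) : 'M[R]_N := invmx (omega x).

Definition Gamma (i j p : 'I_N) (x : pt) : R :=
  - \sum_(s < r) \sum_(k < N)
      omega_inv x j k * (X s k x * pd p (Y s i) x - Y s k x * pd p (X s i) x).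

Definition nabla_coord (j : 'I_N) (xi : oneform) : oneform :=
  fun p x => pd j (xi p) x - \sum_(i < N) Gamma i j p x * xi i x.

Definition nabla (V : vfield) (xi : oneform) : oneform :=
  fun p x => \sum_(j < N) V j x * nabla_coord j xi p x.

Definition ahat (a : pt -> R) : vfield :=
  fun j x => \sum_(k < N) omega x k j * pd k a x.

End Coords.

From HB Require Import structures.
From mathcomp Require Import all_boot all_order all_algebra.
From mathcomp Require Import all_classical all_reals all_analysis.
From mathcomp Require Import ring.
Import Order.TTheory GRing.Theory Num.Theory.
Import numFieldNormedType.Exports.
Set Implicit Arguments. Unset Strict Implicit. Unset Printing Implicit Defensive.
Local Open Scope classical_set_scope.
Local Open Scope ring_scope.

(* Two observations reduce the identity to linear algebra at a point.  Since
   [hat a] is the row of differentials [da] multiplied by [omega], contracting it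
   with [omega^-1] returns [da]; hence [hat a^j Gamma^i_jp] collapses to
   [-sum (X(a) Y^i_,p - Y(a) X^i_,p)].  On the other side, Cartan's formula
   [d<Z, xi> + varpi_Z dxi = L_Z xi] has components [Z^k xi_p,k + Z^i_,p xi_i],
   and expanding [hat a = sum (X(a) Y - Y(a) X)] matches both sides term by term. *)

Section LieDerivative.
Variables (R : realType) (N : nat).
Implicit Types (Z : vfield R N) (xi : oneform R N) (x : 'rV[R]_N).

Lemma pd_pairing Z xi x p :
  (forall i, differentiable (Z i) x) -> (forall i, differentiable (xi i) x) ->
  pd p (pairing Z xi) x = \sum_i (pd p (Z i) x * xi i x + Z i x * pd p (xi i) x).
Proof.
move=> dZ dxi.
have -> : pairing Z xi = \sum_i (Z i * xi i) by rewrite fct_sumE.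
rewrite /pd derive_sum => [|i]; last by apply: derivableM; exact: diff_derivable.
apply: eq_bigr => i _; rewrite deriveM; try exact: diff_derivable.
by rewrite /= addrC; congr (_ + _); exact: mulrC.
Qed.

Definition lie_oneform Z xi : oneform R N :=
  fun p x => \sum_k Z k x * pd k (xi p) x + \sum_i pd p (Z i) x * xi i x.

Lemma cartan_formula Z xi x p :
  (forall i, differentiable (Z i) x) -> (forall i, differentiable (xi i) x) ->
  dfun (pairing Z xi) p x + iprod Z (dform xi) p x = lie_oneform Z xi p x.
Proof.
move=> dZ dxi; rewrite /dfun pd_pairing // /iprod /dform /lie_oneform.
rewrite addrC -!big_split /=; apply: eq_bigr => i _; ring.
Qed.

End LieDerivative.

Section Connection.
Variables (R : realType) (N r : nat) (X Y : 'I_r -> vfield R N).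
Implicit Types (a : 'rV[R]_N -> R) (V : vfield R N) (xi : oneform R N) (x : 'rV[R]_N).

Definition grad a x : 'rV[R]_N := \row_k pd k a x.

Lemma ahat_row a x : \row_j ahat X Y a j x = grad a x *m omega X Y x.
Proof. by apply/rowP => j; rewrite !mxE; apply: eq_bigr => k _; rewrite !mxE mulrC. Qed.

Lemma ahatE a j x :
  ahat X Y a j x = \sum_s (vf_apply (X s) a x * Y s j x - vf_apply (Y s) a x * X s j x).
Proof.
rewrite /ahat /vf_apply /omega.
under eq_bigr do rewrite mxE mulr_suml.
rewrite exchange_big; apply: eq_bigr => s _.
by rewrite !mulr_suml -sumrB; apply: eq_bigr => k _; ring.
Qed.

Lemma ahat_omega_inv a x m : omega X Y x \in unitmx ->
  \sum_j ahat X Y a j x * omega_inv X Y x j m = pd m a x.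
Proof.
move=> unit_omega.
have := congr1 (fun M : 'rV_N => M 0 m) (mulmxK unit_omega (grad a x)).
by rewrite -ahat_row !mxE => <-; apply: eq_bigr => j _; rewrite mxE.
Qed.

Lemma ahat_Gamma a x i p : omega X Y x \in unitmx ->
  \sum_j ahat X Y a j x * Gamma X Y i j p x =
  - \sum_s (vf_apply (X s) a x * pd p (Y s i) x - vf_apply (Y s) a x * pd p (X s i) x).
Proof.
move=> unit_omega; rewrite /Gamma.
under eq_bigr do rewrite mulrN mulr_sumr.
rewrite sumrN exchange_big; congr (- _); apply: eq_bigr => s _.
under eq_bigr do rewrite mulr_sumr.
rewrite exchange_big.
under eq_bigr do under eq_bigr do rewrite mulrA.
under eq_bigr do rewrite -mulr_suml ahat_omega_inv //.
by rewrite /vf_apply !mulr_suml -sumrB; apply: eq_bigr => k _; ring.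
Qed.

Lemma nablaE V xi p x :
  nabla X Y V xi p x = \sum_j V j x * pd j (xi p) x
                       - \sum_i (\sum_j V j x * Gamma X Y i j p x) * xi i x.
Proof.
rewrite /nabla /nabla_coord.
under eq_bigr do rewrite mulrBr mulr_sumr.
rewrite sumrB exchange_big; congr (_ - _); apply: eq_bigr => i _.
by rewrite mulr_suml; apply: eq_bigr => j _; rewrite mulrA.
Qed.

Lemma nabla_ahatE a xi x p : omega X Y x \in unitmx ->
  nabla X Y (ahat X Y a) xi p x =
  \sum_s (vf_apply (X s) a x * lie_oneform (Y s) xi p x
          - vf_apply (Y s) a x * lie_oneform (X s) xi p x).
Proof.
move=> unit_omega; rewrite nablaE.
rewrite [S in S - _](eq_bigr (fun j => \sum_s (vf_apply (X s) a x * Y s j x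
    - vf_apply (Y s) a x * X s j x) * pd j (xi p) x)); last first.
  by move=> j _; rewrite ahatE mulr_suml.
rewrite [S in _ - S](eq_bigr (fun i => - \sum_s (vf_apply (X s) a x * pd p (Y s i) x
    - vf_apply (Y s) a x * pd p (X s i) x) * xi i x)); last first.
  by move=> i _; rewrite ahat_Gamma // mulNr mulr_suml.
rewrite sumrN opprK exchange_big [S in _ + S]exchange_big -big_split /=.
apply: eq_bigr => s _.
rewrite /lie_oneform !mulrDr !mulr_sumr -!big_split /= -sumrB.
by apply: eq_bigr => j _; ring.
Qed.

End Connection.

Theorem proposition3p1p1 (R : realType) (N r : nat) (U : set 'rV[R]_N)
  (X Y : 'I_r -> 'I_N -> 'rV[R]_N -> R) :
  open U ->
  (forall s i, smooth_on U (X s i)) ->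
  (forall s i, smooth_on U (Y s i)) ->
  (forall x, U x -> omega X Y x \in unitmx) ->
  forall (a : 'rV[R]_N -> R) (xi : 'I_N -> 'rV[R]_N -> R),
  smooth_on U a -> (forall i, smooth_on U (xi i)) ->
  forall x, U x -> forall p : 'I_N,
    nabla X Y (ahat X Y a) xi p x =
    \sum_(s < r)
      ( vf_apply (X s) a x *
          (dfun (pairing (Y s) xi) p x + iprod (Y s) (dform xi) p x)
      - vf_apply (Y s) a x *
          (dfun (pairing (X s) xi) p x + iprod (X s) (dform xi) p x)).
Proof.
move=> _ smX smY unit_omega a xi _ smxi x Ux p.
have dX s i : differentiable (X s i) x := smX s i [::] x Ux.
have dY s i : differentiable (Y s i) x := smY s i [::] x Ux.
have dxi i : differentiable (xi i) x := smxi i [::] x Ux.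
rewrite nabla_ahatE ?unit_omega //; apply: eq_bigr => s _.
by rewrite !cartan_formula.
Qed.
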